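(* Let $X$ be a real Banach space with $\dim X\ge 2$. Then $J(X)\,S_P(X)\ge C'_{NJ}(X)-1$.
   Context: For a real Banach space $X$ with unit sphere $S_X$, the P-angle constant is $S_P(X)=\sup\left\{\frac{\|x+y\|^2+\|x-y\|^2-4}{2\|x+y\|\,\|x-y\|}: x,y\in S_X,\ x\neq \pm y\right\}$. The James constant is $J(X)=\sup\{\min\{\|x+y\|,\|x-y\|\}: x,y\in S_X\}$, and the modified von Neumann–Jordan constant is $C'_{NJ}(X)=\sup\left\{\frac{\|x+y\|^2+\|x-y\|^2}{4}: x,y\in S_X\right\}$. *)

From HB Require Import structures.
From mathcomp Require Import all_boot all_order all_algebra.
From mathcomp Require Import all_classical all_reals all_analysis.
Set Implicit Arguments. Unset Strict Implicit. Unset Printing Implicit Defensive.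
Import Order.TTheory GRing.Theory Num.Theory.
Import numFieldNormedType.Exports.
Local Open Scope classical_set_scope.
Local Open Scope ring_scope.

Definition P_angle_const (R : realType) (X : normedModType R) : \bar R :=
  ereal_sup [set r : \bar R | exists x y : X,
    [/\ `|x| = 1, `|y| = 1, x <> y, x <> - y &
     r = ((`|x + y| ^+ 2 + `|x - y| ^+ 2 - 4) / (2 * `|x + y| * `|x - y|))%:E]].

Definition James_const (R : realType) (X : normedModType R) : \bar R :=
  ereal_sup [set r : \bar R | exists x y : X,
    [/\ `|x| = 1, `|y| = 1 &
     r = (Num.min `|x + y| `|x - y|)%:E]].

Definition mod_vNJ_const (R : realType) (X : normedModType R) : \bar R :=
  ereal_sup [set r : \bar R | exists x y : X,
    [/\ `|x| = 1, `|y| = 1 &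
     r = ((`|x + y| ^+ 2 + `|x - y| ^+ 2) / 4)%:E]].

From HB Require Import structures.
From mathcomp Require Import all_boot all_order all_algebra.
From mathcomp Require Import all_classical all_reals all_analysis.
From mathcomp Require Import ring lra.
Import Order.TTheory GRing.Theory Num.Theory.
Import numFieldNormedType.Exports.
Local Open Scope ring_scope.

(* For unit vectors x, y with a = |x + y|, b = |x - y| and x <> +-y one has
   (a^2 + b^2)/4 - 1 = (ab/2) P(x, y), where P(x, y) is the quotient defining
   S_P(X), and ab/2 <= min(a, b) because a, b <= 2.  So every value in the
   supremum defining C'_NJ(X) - 1 is at most J(X) S_P(X), provided both
   constants are nonnegative.  S_P(X) >= 0 needs a pair
   with a^2 + b^2 >= 4: fixing a unit e and moving a unit u continuously from
   u_0 to -u_0 inside a two-dimensional subspace, the intermediate value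
   theorem yields |e + u| = |e - u| =: c; the pair (e, u) works if c^2 >= 2,
   and the pair ((e + u)/c, (e - u)/c) otherwise. *)

Lemma sumsq_div4_sub1_le_min_mul (R : realFieldType) (a b : R) :
  0 < a -> 0 < b -> a <= 2 -> b <= 2 -> 4 <= a ^+ 2 + b ^+ 2 ->
  (a ^+ 2 + b ^+ 2) / 4 - 1 <=
    Num.min a b * ((a ^+ 2 + b ^+ 2 - 4) / (2 * a * b)).
Proof.
move=> a0 b0 a2 b2 ab4.
set P := (a ^+ 2 + b ^+ 2 - 4) / (2 * a * b).
have P0 : 0 <= P by rewrite divr_ge0 ?subr_ge0 // !mulr_ge0 ?ltW.
have -> : (a ^+ 2 + b ^+ 2) / 4 - 1 = (a * b / 2) * P.
  by rewrite /P; field; rewrite !gt_eqF.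
by rewrite ler_wpM2r // le_min; apply/andP; split; nra.
Qed.

Section NormedSpace.
Context {R : realType} {X : normedModType R}.

Lemma two_le_normD_normB (x y : X) : `|x| = 1 -> 2 <= `|x + y| + `|x - y|.
Proof.
move=> hx; have -> : 2 = `|(x + y) + (x - y)|.
  by rewrite addrACA subrr addr0 -mulr2n normrMn hx.
exact: ler_normD.
Qed.

Lemma normD_le2 (x y : X) : `|x| = 1 -> `|y| = 1 -> `|x + y| <= 2.
Proof. by move=> hx hy; rewrite (le_trans (ler_normD _ _)) // hx hy. Qed.

Lemma normB_le2 (x y : X) : `|x| = 1 -> `|y| = 1 -> `|x - y| <= 2.
Proof. by move=> hx hy; apply: normD_le2; rewrite ?normrN. Qed.

Lemma James_const_ge0 (e : X) : `|e| = 1 -> (0%:E <= James_const X)%E.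
Proof.
move=> he; apply: le_ereal_sup_tmp; exists (Num.min `|e + e| `|e - e|)%:E.
  by exists e, e.
by rewrite lee_fin subrr normr0 le_min normr_ge0 lexx.
Qed.

Lemma P_angle_const_ge0_of_pair (x y : X) :
  `|x| = 1 -> `|y| = 1 -> x <> y -> x <> - y ->
  4 <= `|x + y| ^+ 2 + `|x - y| ^+ 2 -> (0%:E <= P_angle_const X)%E.
Proof.
move=> hx hy xy xNy h4; apply: le_ereal_sup_tmp.
exists ((`|x + y| ^+ 2 + `|x - y| ^+ 2 - 4) / (2 * `|x + y| * `|x - y|))%:E.
  by exists x, y.
by rewrite lee_fin divr_ge0 ?subr_ge0 // !mulr_ge0.
Qed.

Lemma P_angle_const_ge0_of_isosceles (x y : X) :
  `|x| = 1 -> `|y| = 1 -> `|x + y| = `|x - y| -> (0%:E <= P_angle_const X)%E.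
Proof.
move=> hx hy hab; have := two_le_normD_normB x y hx.
rewrite -hab; set c := `|x + y| => c1.
have c0 : 0 < c by lra.
have [c2|c2] := leP 2 (c ^+ 2).
  apply: (P_angle_const_ge0_of_pair x y hx hy).
  - by move=> exy; move: hab; rewrite -/c exy subrr normr0 => c_0; lra.
  - by move=> exy; move: c0; rewrite /c exy addNr normr0 ltxx.
  - by rewrite -hab -/c; lra.
(* u + v = 2x/c and u - v = 2y/c, so this pair has a^2 + b^2 = 8/c^2 > 4. *)
pose u := c^-1 *: (x + y); pose v := c^-1 *: (x - y).
have nu : `|u| = 1 by rewrite normrZ ger0_norm ?invr_ge0 ?ltW // mulVf ?gt_eqF.
have nv : `|v| = 1 by rewrite normrZ ger0_norm ?invr_ge0 ?ltW // -hab mulVf ?gt_eqF.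
have uDv : `|u + v| = 2 / c.
  rewrite -scalerDr addrACA subrr addr0 normrZ ger0_norm ?invr_ge0 ?ltW //.
  by rewrite -mulr2n normrMn hx mulrC.
have uBv : `|u - v| = 2 / c.
  rewrite -scalerBr opprB addrC addrA subrK normrZ ger0_norm ?invr_ge0 ?ltW //.
  by rewrite -mulr2n normrMn hy mulrC.
have q0 : 0 < 2 / c by rewrite divr_gt0.
apply: (P_angle_const_ge0_of_pair u v nu nv).
- by move=> euv; move: uBv; rewrite euv subrr normr0 => q; lra.
- by move=> euv; move: uDv; rewrite euv addNr normr0 => q; lra.
- rewrite uDv uBv; suff : 2 <= (2 / c) ^+ 2 by lra.
  by rewrite expr_div_n ler_pdivlMr ?exprn_gt0 // [2 ^+ 2]expr2; lra.
Qed.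

Lemma continuous_normalize {T : topologicalType} (w : T -> X) :
  continuous w -> (forall t, w t != 0) -> continuous (fun t => `|w t|^-1 *: w t).
Proof.
move=> cw w0 t.
have cn : {for t, continuous (fun t => `|w t|)}.
  exact: continuous_comp (cw t) (@norm_continuous _ _ _).
apply: (@continuousZ _ _ _ (fun t => `|w t|^-1) w t); last exact: cw.
by apply: continuousV; rewrite ?normr_eq0.
Qed.

Lemma exists_isosceles_unit_pair (x y : X) :
  (forall a b : R, a *: x + b *: y = 0 -> a = 0 /\ b = 0) ->
  exists e u : X, [/\ `|e| = 1, `|u| = 1 & `|e + u| = `|e - u|].
Proof.
move=> indep.
have x0 : x != 0.
  apply/eqP => x_0; have := indep 1 0; rewrite x_0 scaler0 scale0r addr0.
  by case=> // /eqP; rewrite oner_eq0.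
pose w (t : R) := (1 - t * t) *: x + t *: y.
have w0 t : w t != 0.
  by apply/eqP => /indep [+ t0]; rewrite t0 mulr0 subr0; lra.
have cw : continuous w.
  move=> t; have cq : {for t, continuous (fun t : R => 1 - t * t)}.
    by apply: continuousB; [exact: cst_continuous | apply: continuousM].
  by apply: cvgD; [exact: continuousZr_tmp cq | exact: continuousZr_tmp cvg_id].
pose e := `|x|^-1 *: x; pose u t := `|w t|^-1 *: w t.
pose f t := `|e + u t| - `|e - u t|.
have cf : continuous f.
  move=> t; have cu := continuous_normalize w cw w0 t.
  have cDu : {for t, continuous (fun r => `|e + u r|)}.
    apply: continuous_comp (@norm_continuous _ _ _).
    by apply: continuousD => //; exact: cst_continuous.
  have cBu : {for t, continuous (fun r => `|e - u r|)}.
    apply: continuous_comp (@norm_continuous _ _ _).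
    by apply: continuousB => //; exact: cst_continuous.
  exact: cvgB cDu cBu.
have uN1 : u (-1) = - u 1.
  rewrite /u /w mulrNN mulr1 subrr !scale0r !add0r scaleN1r normrN.
  by rewrite scale1r scalerN.
have fN1 : f (-1) = - f 1 by rewrite /f uN1 opprK opprB addrC.
have [c _ fc] : exists2 c, c \in `[-1, 1] & f c = 0.
  apply: IVT; [lra | exact: continuous_subspaceT |].
  rewrite fN1 ge_min le_max oppr_le0 oppr_ge0.
  by rewrite [X in _ && X]orbC andbb le_total.
exists e, (u c); split; [exact: normfZV | exact: normfZV |].
by move: fc; rewrite /f; lra.
Qed.

Lemma P_angle_const_ge0 (x y : X) :
  (forall a b : R, a *: x + b *: y = 0 -> a = 0 /\ b = 0) ->
  (0%:E <= P_angle_const X)%E.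
Proof.
move=> /exists_isosceles_unit_pair [e [u [ne nu hab]]].
exact: P_angle_const_ge0_of_isosceles e u ne nu hab.
Qed.

Lemma vNJ_value_sub1_le_James_mul_P (x y : X) :
  `|x| = 1 -> `|y| = 1 ->
  (0%:E <= James_const X)%E -> (0%:E <= P_angle_const X)%E ->
  (((`|x + y| ^+ 2 + `|x - y| ^+ 2) / 4 - 1)%:E <=
    James_const X * P_angle_const X)%E.
Proof.
move=> hx hy J0 S0.
have a2 := normD_le2 x y hx hy; have b2 := normB_le2 x y hx hy.
have a0 := normr_ge0 (x + y); have b0 := normr_ge0 (x - y).
set a := `|x + y| in a2 a0 *; set b := `|x - y| in b2 b0 *.
have [le0|gt0] := leP ((a ^+ 2 + b ^+ 2) / 4 - 1) 0.
  by apply: le_trans (mule_ge0 J0 S0); rewrite lee_fin.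
have ap : 0 < a by rewrite lt_neqAle a0 andbT; apply/eqP => a_0; nra.
have bp : 0 < b by rewrite lt_neqAle b0 andbT; apply/eqP => b_0; nra.
have xy : x <> y by move=> exy; move: bp; rewrite /b exy subrr normr0 ltxx.
have xNy : x <> - y by move=> exy; move: ap; rewrite /a exy addNr normr0 ltxx.
set P := (a ^+ 2 + b ^+ 2 - 4) / (2 * a * b).
have ab4 : 4 <= a ^+ 2 + b ^+ 2 by lra.
have P0 : 0 <= P by rewrite divr_ge0 ?subr_ge0 // !mulr_ge0 ?ltW.
apply: (@le_trans _ _ (Num.min a b * P)%:E).
  by rewrite lee_fin sumsq_div4_sub1_le_min_mul.
rewrite EFinM lee_pmul ?lee_fin ?le_min ?a0 //.
- by apply: le_ereal_sup_tmp; exists (Num.min a b)%:E => //; exists x, y.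
- by apply: le_ereal_sup_tmp; exists P%:E => //; exists x, y.
Qed.

End NormedSpace.

Theorem mainTheorem5 (R : realType) (X : completeNormedModType R)
  (hdim : exists x y : X, forall a b : R, a *: x + b *: y = 0 -> a = 0 /\ b = 0) :
  (mod_vNJ_const X - 1%:E <= James_const X * P_angle_const X)%E.
Proof.
have [x [y indep]] := hdim.
have [e [_ [ne _ _]]] := exists_isosceles_unit_pair x y indep.
have J0 := James_const_ge0 e ne.
have S0 := P_angle_const_ge0 x y indep.
rewrite leeBlDr //; apply: ge_ereal_sup => _ [u [v [nu nv ->]]].
by rewrite -leeBlDr // -EFinB vNJ_value_sub1_le_James_mul_P.
Qed.
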